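(* Let $P:\mathscr P\to\mathscr T$, $Q:\mathscr Q\to\mathscr T$ and $A:\mathscr T\to\mathscr U$ be morphisms of $\mathscr J$-theories. (1) If $P$ commutes with $Q$, then $A\circ P$ commutes with $A\circ Q$. (2) If $A$ is a subtheory embedding (i.e. its hom-components are monomorphisms in $\mathscr V$) and $A\circ P$ commutes with $A\circ Q$, then $P$ commutes with $Q$.
   Context: $(\mathscr V,\otimes,I)$ is a closed symmetric monoidal category, $\underline{\mathscr V}$ the associated $\mathscr V$-category; everything is $\mathscr V$-enriched. A system of arities is a full sub-$\mathscr V$-category $\mathscr J\hookrightarrow\underline{\mathscr V}$ containing $I$ and closed under $\otimes$. A cotensor $[V,C]$ is an object with counit $V\to\mathscr C([V,C],C)$ inducing $\mathscr C(-,[V,C])\cong\underline{\mathscr V}(V,\mathscr C(-,C))$. A $\mathscr J$-theory is a $\mathscr V$-category $\mathscr T$ with $\mathrm{ob}\,\mathscr T=\mathrm{ob}\,\mathscr J$ and an identity-on-objects $\tau:\mathscr J^{\mathrm{op}}\to\mathscr T$ preserving cotensors by objects of $\mathscr J$; a morphism $(\mathscr T,\tau)\to(\mathscr U,\upsilon)$ is a $\mathscr V$-functor $A$ with $A\tau=\upsilon$. In a theory $(\mathscr T,\tau)$, $J\otimes K$ and $K\otimes J$ are cotensors of $K$ by $J$ with counits $J\xrightarrow{\mathrm{Coev}}\underline{\mathscr V}(K,J\otimes K)=\mathscr J^{\mathrm{op}}(J\otimes K,K)\xrightarrow{\tau}\mathscr T(J\otimes K,K)$ and $J\xrightarrow{\mathrm{Coev}'}\underline{\mathscr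 V}(K,K\otimes J)\xrightarrow{\tau}\mathscr T(K\otimes J,K)$ ($\mathrm{Coev}'$ = coevaluation composed with symmetry), inducing $\mathscr V$-functors $[J,-]_\ell$ ($K\mapsto J\otimes K$) and $[J,-]_r$ ($K\mapsto K\otimes J$). Kronecker products $\mathsf k,\tilde{\mathsf k}:\mathscr T(J,J')\otimes\mathscr T(K,K')\to\mathscr T(J\otimes K,J'\otimes K')$ are composition after $[K,-]_r\otimes[J',-]_\ell$ (into $\mathscr T(J\otimes K,J'\otimes K)\otimes\mathscr T(J'\otimes K,J'\otimes K')$), resp. after $[K',-]_r\otimes[J,-]_\ell$ (into $\mathscr T(J\otimes K',J'\otimes K')\otimes\mathscr T(J\otimes K,J\otimes K')$). Morphisms of theories $P:\mathscr P\to\mathscr T$, $Q:\mathscr Q\to\mathscr T$ commute if $\mathsf k\cdot(P_{JJ'}\otimes Q_{KK'})=\tilde{\mathsf k}\cdot(P_{JJ'}\otimes Q_{KK'})$ in $\mathscr T$ for all $J,J',K,K'\in\mathscr J$. *)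

Record SMCC := {
  ob : Type;
  hom : ob -> ob -> Type;
  comp : forall {a b c : ob}, hom b c -> hom a b -> hom a c;
  idm : forall a : ob, hom a a;
  comp_assoc : forall a b c d (f : hom a b) (g : hom b c) (h : hom c d),
      comp h (comp g f) = comp (comp h g) f;
  comp_id_l : forall a b (f : hom a b), comp (idm b) f = f;
  comp_id_r : forall a b (f : hom a b), comp f (idm a) = f;

  tens : ob -> ob -> ob;
  tensm : forall {a b c d : ob}, hom a b -> hom c d -> hom (tens a c) (tens b d);
  tensm_id : forall a b, tensm (idm a) (idm b) = idm (tens a b);
  tensm_comp : forall a b c a' b' c' (f : hom a b) (f' : hom b c)
      (g : hom a' b') (g' : hom b' c'),
      tensm (comp f' f) (comp g' g) = comp (tensm f' g') (tensm f g);
  unit : ob;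

  assoc : forall a b c, hom (tens (tens a b) c) (tens a (tens b c));
  assoc_inv : forall a b c, hom (tens a (tens b c)) (tens (tens a b) c);
  assoc_iso1 : forall a b c, comp (assoc a b c) (assoc_inv a b c) = idm _;
  assoc_iso2 : forall a b c, comp (assoc_inv a b c) (assoc a b c) = idm _;
  assoc_nat : forall a b c a' b' c' (f : hom a a') (g : hom b b') (h : hom c c'),
      comp (assoc a' b' c') (tensm (tensm f g) h)
      = comp (tensm f (tensm g h)) (assoc a b c);

  lunit : forall a, hom (tens unit a) a;
  lunit_inv : forall a, hom a (tens unit a);
  lunit_iso1 : forall a, comp (lunit a) (lunit_inv a) = idm _;
  lunit_iso2 : forall a, comp (lunit_inv a) (lunit a) = idm _;
  lunit_nat : forall a b (f : hom a b),
      comp (lunit b) (tensm (idm unit) f) = comp f (lunit a);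

  runit : forall a, hom (tens a unit) a;
  runit_inv : forall a, hom a (tens a unit);
  runit_iso1 : forall a, comp (runit a) (runit_inv a) = idm _;
  runit_iso2 : forall a, comp (runit_inv a) (runit a) = idm _;
  runit_nat : forall a b (f : hom a b),
      comp (runit b) (tensm f (idm unit)) = comp f (runit a);

  sym : forall a b, hom (tens a b) (tens b a);
  sym_inv : forall a b, comp (sym b a) (sym a b) = idm _;
  sym_nat : forall a b a' b' (f : hom a a') (g : hom b b'),
      comp (sym a' b') (tensm f g) = comp (tensm g f) (sym a b);

  pentagon : forall a b c d,
      comp (assoc a b (tens c d)) (assoc (tens a b) c d)
      = comp (tensm (idm a) (assoc b c d))
             (comp (assoc a (tens b c) d) (tensm (assoc a b c) (idm d)));
  triangle : forall a b,
      comp (tensm (idm a) (lunit b)) (assoc a unit b)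
      = tensm (runit a) (idm b);
  hexagon : forall a b c,
      comp (assoc b c a) (comp (sym a (tens b c)) (assoc a b c))
      = comp (tensm (idm b) (sym a c))
             (comp (assoc b a c) (tensm (sym a b) (idm c)));

  (* closed structure: (- (x) a) -| ihom a - *)
  ihom : ob -> ob -> ob;
  ev : forall a b, hom (tens (ihom a b) a) b;
  curry : forall {a b c}, hom (tens c a) b -> hom c (ihom a b);
  ev_curry : forall a b c (f : hom (tens c a) b),
      comp (ev a b) (tensm (curry f) (idm a)) = f;
  curry_ev : forall a b c (g : hom c (ihom a b)),
      curry (comp (ev a b) (tensm g (idm a))) = g
}.

Arguments hom : clear implicits.
Arguments comp {V a b c} _ _ : rename.
Arguments idm {V} a : rename.
Arguments tens {V} _ _ : rename.
Arguments tensm {V a b c d} _ _ : rename.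
Arguments unit {V} : rename.
Arguments assoc {V} a b c : rename.
Arguments lunit {V} a : rename.
Arguments runit {V} a : rename.
Arguments sym {V} a b : rename.
Arguments ihom {V} _ _ : rename.
Arguments ev {V} a b : rename.
Arguments curry {V a b c} _ : rename.

Section Enriched.
Variable V : SMCC.

Definition is_iso {a b : ob V} (f : hom V a b) : Prop :=
  exists g : hom V b a, comp g f = idm a /\ comp f g = idm b.

Definition is_mono {a b : ob V} (f : hom V a b) : Prop :=
  forall z (g h : hom V z a), comp f g = comp f h -> g = h.

Definition compV (a b c : ob V) : hom V (tens (ihom b c) (ihom a b)) (ihom a c) :=
  curry (comp (ev b c) (comp (tensm (idm _) (ev a b)) (assoc _ _ _))).
Definition idV (a : ob V) : hom V unit (ihom a a) := curry (lunit a).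

Record VCatData := {
  cob : Type;
  chom : cob -> cob -> ob V;
  ccomp : forall a b c, hom V (tens (chom b c) (chom a b)) (chom a c);
  cid : forall a, hom V unit (chom a a)
}.
Arguments chom : clear implicits.
Arguments ccomp : clear implicits.
Arguments cid : clear implicits.

Definition is_VCat (C : VCatData) : Prop :=
  (forall a b c d,
     comp (ccomp C a b d) (tensm (ccomp C b c d) (idm _))
     = comp (ccomp C a c d) (comp (tensm (idm _) (ccomp C a b c)) (assoc _ _ _)))
  /\ (forall a b, comp (ccomp C a b b) (tensm (cid C b) (idm _)) = lunit _)
  /\ (forall a b, comp (ccomp C a a b) (tensm (idm _) (cid C a)) = runit _).

Definition is_VFunctor (C D : VCatData) (fo : cob C -> cob D)
    (fh : forall a b, hom V (chom C a b) (chom D (fo a) (fo b))) : Prop :=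
  (forall a b c, comp (fh a c) (ccomp C a b c)
                 = comp (ccomp D (fo a) (fo b) (fo c)) (tensm (fh b c) (fh a b)))
  /\ (forall a, comp (fh a a) (cid C a) = cid D (fo a)).

(* Cotensors: the map C(y,x) -> [v, C(y,c)] induced by e : v -> C(x,c). *)
Definition cotmap (C : VCatData) (v : ob V) (y x c : cob C)
    (e : hom V v (chom C x c)) : hom V (chom C y x) (ihom v (chom C y c)) :=
  curry (comp (ccomp C y x c) (comp (sym _ _) (tensm (idm _) e))).

Definition is_cotensor (C : VCatData) (v : ob V) (x c : cob C)
    (e : hom V v (chom C x c)) : Prop :=
  forall y, is_iso (cotmap C v y x c e).

(* Systems of arities: full sub-V-categories of underline V containing I
   and closed under tensor, given by their object predicate. *)
Record Arities := {
  Jp : ob V -> Prop;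
  Jp_unit : Jp unit;
  Jp_tens : forall a b, Jp a -> Jp b -> Jp (tens a b)
}.

Variable J : Arities.

Definition Jobj : Type := { x : ob V | Jp J x }.
Definition jv (j : Jobj) : ob V := proj1_sig j.
Definition jt (j k : Jobj) : Jobj :=
  exist _ (tens (jv j) (jv k)) (Jp_tens J _ _ (proj2_sig j) (proj2_sig k)).

Definition Jop : VCatData :=
  {| cob := Jobj;
     chom := fun a b => ihom (jv b) (jv a);
     ccomp := fun a b c => comp (compV (jv c) (jv b) (jv a)) (sym _ _);
     cid := fun a => idV (jv a) |}.

Record Theory := {
  thom : Jobj -> Jobj -> ob V;
  tcomp : forall a b c, hom V (tens (thom b c) (thom a b)) (thom a c);
  tid : forall a, hom V unit (thom a a);
  tau : forall a b, hom V (ihom (jv b) (jv a)) (thom a b);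
  th_VCat : is_VCat (Build_VCatData Jobj thom tcomp tid);
  tau_VFunctor : is_VFunctor Jop (Build_VCatData Jobj thom tcomp tid) (fun x => x) tau;
  tau_cotensors : forall (v x c : Jobj) (e : hom V (jv v) (chom Jop x c)),
      is_cotensor Jop (jv v) x c e ->
      is_cotensor (Build_VCatData Jobj thom tcomp tid) (jv v) x c (comp (tau x c) e)
}.
Arguments thom : clear implicits.
Arguments tcomp : clear implicits.
Arguments tid : clear implicits.
Arguments tau : clear implicits.

Definition tdata (T : Theory) : VCatData :=
  Build_VCatData Jobj (thom T) (tcomp T) (tid T).

Record TheoryMor (T U : Theory) := {
  tm : forall a b, hom V (thom T a b) (thom U a b);
  tm_VFunctor : is_VFunctor (tdata T) (tdata U) (fun x => x) tm;
  tm_tau : forall a b, comp (tm a b) (tau T a b) = tau U a b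
}.
Arguments tm {T U} _ _ _.

Definition subtheory_embedding {T U : Theory} (A : TheoryMor T U) : Prop :=
  forall a b, is_mono (tm A a b).

(* Coevaluations and the counits exhibiting J(x)K and K(x)J as cotensors of K by J. *)
Definition Coev (j k : Jobj) : hom V (jv j) (ihom (jv k) (tens (jv j) (jv k))) :=
  curry (idm _).
Definition Coev' (j k : Jobj) : hom V (jv j) (ihom (jv k) (tens (jv k) (jv j))) :=
  curry (sym (jv j) (jv k)).

Definition lcounit (T : Theory) (j k : Jobj) : hom V (jv j) (thom T (jt j k) k) :=
  comp (tau T (jt j k) k) (Coev j k).
Definition rcounit (T : Theory) (j k : Jobj) : hom V (jv j) (thom T (jt k j) k) :=
  comp (tau T (jt k j) k) (Coev' j k).

(* L j is the hom-part of [j,-]_l (K |-> j(x)K), characterized by the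
   universal property of the cotensor j(x)K'. *)
Definition is_lfun (T : Theory)
    (L : forall j k k', hom V (thom T k k') (thom T (jt j k) (jt j k'))) : Prop :=
  forall j k k',
    comp (cotmap (tdata T) (jv j) (jt j k) (jt j k') k' (lcounit T j k')) (L j k k')
    = curry (comp (tcomp T (jt j k) k k') (tensm (idm _) (lcounit T j k))).

(* R j is the hom-part of [j,-]_r (K |-> K(x)j). *)
Definition is_rfun (T : Theory)
    (R : forall j k k', hom V (thom T k k') (thom T (jt k j) (jt k' j))) : Prop :=
  forall j k k',
    comp (cotmap (tdata T) (jv j) (jt k j) (jt k' j) k' (rcounit T j k')) (R j k k')
    = curry (comp (tcomp T (jt k j) k k') (tensm (idm _) (rcounit T j k))).

Definition kron (T : Theory)
    (L : forall j k k', hom V (thom T k k') (thom T (jt j k) (jt j k')))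
    (R : forall j k k', hom V (thom T k k') (thom T (jt k j) (jt k' j)))
    (j j' k k' : Jobj) :
    hom V (tens (thom T j j') (thom T k k')) (thom T (jt j k) (jt j' k')) :=
  comp (tcomp T (jt j k) (jt j' k) (jt j' k'))
       (comp (sym _ _) (tensm (R k j j') (L j' k k'))).

Definition kront (T : Theory)
    (L : forall j k k', hom V (thom T k k') (thom T (jt j k) (jt j k')))
    (R : forall j k k', hom V (thom T k k') (thom T (jt k j) (jt k' j)))
    (j j' k k' : Jobj) :
    hom V (tens (thom T j j') (thom T k k')) (thom T (jt j k) (jt j' k')) :=
  comp (tcomp T (jt j k) (jt j k') (jt j' k'))
       (tensm (R k' j j') (L j k k')).

Definition commute_fam {T : Theory}
    {Ph : Jobj -> Jobj -> ob V} (P : forall a b, hom V (Ph a b) (thom T a b))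
    {Qh : Jobj -> Jobj -> ob V} (Q : forall a b, hom V (Qh a b) (thom T a b)) : Prop :=
  forall L R, is_lfun T L -> is_rfun T R ->
  forall j j' k k',
    comp (kron T L R j j' k k') (tensm (P j j') (Q k k'))
    = comp (kront T L R j j' k k') (tensm (P j j') (Q k k')).

Definition commute {TP TQ T : Theory} (P : TheoryMor TP T) (Q : TheoryMor TQ T) : Prop :=
  commute_fam (tm P) (tm Q).

Definition mor_comp_fam {S T U : Theory} (A : TheoryMor T U) (P : TheoryMor S T) :
    forall a b, hom V (thom S a b) (thom U a b) :=
  fun a b => comp (tm A a b) (tm P a b).

End Enriched.
Arguments tm {V J T U} _ _ _.
Arguments is_iso {V a b} _.
Arguments is_mono {V a b} _.
Arguments subtheory_embedding {V J T U} _.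
Arguments commute_fam {V J T Ph} _ {Qh} _.
Arguments commute {V J TP TQ T} _ _.
Arguments mor_comp_fam {V J S T U} _ _ _ _.

From Stdlib Require Import ClassicalEpsilon.

(* A morphism of theories A preserves composition and τ, hence the counits
   exhibiting J ⊗ K and K ⊗ J as cotensors; since [J,-]_l and [J,-]_r are
   determined by the universal property of these cotensors, A commutes with
   them, and therefore A ∘ k = k ∘ (A ⊗ A) and A ∘ k~ = k~ ∘ (A ⊗ A).
   Postcomposing the commutation identity with A gives (1); cancelling the
   monomorphism A from the same identity gives (2). *)

Local Notation "g ∘ f" := (comp g f) (at level 40, left associativity).
Local Notation "f ⊗ g" := (tensm f g) (at level 35).

Section ClosedStructure.
Variable V : SMCC.

Lemma tensm_interchange a b c d (f : hom V a b) (g : hom V c d) :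
  (idm b ⊗ g) ∘ (f ⊗ idm c) = (f ⊗ idm d) ∘ (idm a ⊗ g).
Proof. rewrite <- !tensm_comp, !comp_id_l, !comp_id_r. reflexivity. Qed.

Lemma tensm_comp_idm a b c d (f : hom V a b) (g : hom V b c) :
  (g ∘ f) ⊗ idm d = (g ⊗ idm d) ∘ (f ⊗ idm d).
Proof. rewrite <- tensm_comp, comp_id_l. reflexivity. Qed.

Lemma assoc_inv_nat a b c a' b' c' (f : hom V a a') (g : hom V b b') (h : hom V c c') :
  assoc_inv V a' b' c' ∘ (f ⊗ (g ⊗ h)) = ((f ⊗ g) ⊗ h) ∘ assoc_inv V a b c.
Proof.
  rewrite <- (comp_id_r V _ _ (assoc_inv V a' b' c' ∘ _)), <- (assoc_iso1 V a b c).
  rewrite comp_assoc, <- (comp_assoc _ _ _ _ _ _ (tensm _ _)), <- assoc_nat.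
  rewrite comp_assoc, assoc_iso2, comp_id_l. reflexivity.
Qed.

Lemma uncurry_inj a b c (g h : hom V c (ihom a b)) :
  ev a b ∘ (g ⊗ idm a) = ev a b ∘ (h ⊗ idm a) -> g = h.
Proof. intro E. rewrite <- (curry_ev V a b c g), <- (curry_ev V a b c h), E. reflexivity. Qed.

Lemma curry_precomp a b c d (f : hom V (tens c a) b) (h : hom V d c) :
  curry f ∘ h = curry (f ∘ (h ⊗ idm a)).
Proof.
  apply uncurry_inj. rewrite ev_curry.
  rewrite <- (comp_id_l V _ _ (idm a)) at 1.
  rewrite tensm_comp, comp_assoc, ev_curry. reflexivity.
Qed.

Lemma curry_postcomp a b b' c (f : hom V (tens c a) b) (h : hom V b b') :
  curry (h ∘ ev a b) ∘ curry f = curry (h ∘ f).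
Proof. rewrite curry_precomp, <- comp_assoc, ev_curry. reflexivity. Qed.

Lemma curry_ev_id (a b : ob V) : curry (ev a b) = idm (ihom a b).
Proof. rewrite <- (curry_ev V a b _ (idm _)), tensm_id, comp_id_r. reflexivity. Qed.

Lemma iso_mono a b (f : hom V a b) : is_iso f -> is_mono f.
Proof.
  intros [g [gf _]] z x y E.
  rewrite <- (comp_id_l V _ _ x), <- (comp_id_l V _ _ y), <- gf, <- !comp_assoc, E.
  reflexivity.
Qed.

Lemma iso_factor a b (f : hom V a b) :
  is_iso f -> forall z (h : hom V z b), exists g, f ∘ g = h.
Proof.
  intros [g [_ fg]] z h. exists (g ∘ h). rewrite comp_assoc, fg, comp_id_l. reflexivity.
Qed.

Lemma uncurry2_curry2 j k y (z : ob V) (X : hom V (tens (tens z j) k) y) :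
  ev k y ∘ ((ev j (ihom k y) ∘ (curry (curry X) ⊗ idm j)) ⊗ idm k) = X.
Proof. rewrite !ev_curry. reflexivity. Qed.

Lemma uncurry2_inj j k y (z : ob V) (g h : hom V z (ihom j (ihom k y))) :
  ev k y ∘ ((ev j (ihom k y) ∘ (g ⊗ idm j)) ⊗ idm k)
  = ev k y ∘ ((ev j (ihom k y) ∘ (h ⊗ idm j)) ⊗ idm k) -> g = h.
Proof. intro E. apply uncurry_inj, uncurry_inj, E. Qed.

(* The composite [m, y] ≅ [j ⊗ k, y] ≅ [j, [k, y]] of precomposition with c and currying. *)
Lemma double_curry_iso j k m y (c : hom V (tens j k) m) (d : hom V m (tens j k)) :
  c ∘ d = idm _ -> d ∘ c = idm _ ->
  is_iso (curry (curry (ev m y ∘ (idm _ ⊗ c) ∘ assoc _ j k))).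
Proof.
  intros cd dc.
  set (F := curry (curry (ev m y ∘ (idm _ ⊗ c) ∘ assoc _ j k))).
  exists (curry (ev k y ∘ (ev j (ihom k y) ⊗ idm k) ∘ assoc_inv V _ j k ∘ (idm _ ⊗ d))).
  split.
  - rewrite curry_precomp, <- (curry_ev_id m y). f_equal.
    rewrite <- comp_assoc, tensm_interchange, <- (tensm_id V j k).
    rewrite comp_assoc, <- (comp_assoc _ _ _ _ _ _ (assoc_inv V _ _ _)), assoc_inv_nat.
    rewrite comp_assoc, <- (comp_assoc _ _ _ _ _ _ (ev j _ ⊗ _)), <- tensm_comp, comp_id_l.
    subst F; rewrite uncurry2_curry2.
    rewrite <- (comp_assoc _ _ _ _ _ _ (assoc _ _ _)), assoc_iso1, comp_id_r.
    rewrite <- comp_assoc, <- tensm_comp, comp_id_l, cd, tensm_id, comp_id_r. reflexivity.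
  - apply uncurry2_inj. rewrite (tensm_id V), comp_id_r.
    subst F; rewrite curry_precomp, ev_curry, tensm_comp_idm, comp_assoc, ev_curry.
    rewrite <- comp_assoc, assoc_nat, (tensm_id V j k), comp_assoc.
    rewrite <- (comp_assoc _ _ _ _ _ _ (_ ⊗ c)), tensm_interchange, comp_assoc, ev_curry.
    rewrite <- (comp_assoc _ _ _ _ _ _ (_ ⊗ d)), <- tensm_comp, comp_id_l, dc, tensm_id.
    rewrite comp_id_r, <- comp_assoc, assoc_iso2, comp_id_r. reflexivity.
Qed.
End ClosedStructure.

Section Theories.
Variable V : SMCC.
Variable J : Arities V.

Lemma cotmap_Jop_curry (j k m y : Jobj V J)
    (c : hom V (tens (jv V J j) (jv V J k)) (jv V J m)) :
  cotmap V (Jop V J) (jv V J j) y m k (curry c)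
  = curry (curry (ev _ _ ∘ (idm _ ⊗ c) ∘ assoc _ _ _)).
Proof.
  unfold cotmap; f_equal; apply uncurry_inj; rewrite ev_curry; cbn [ccomp chom Jop].
  rewrite comp_assoc, <- (comp_assoc _ _ _ _ _ _ _ (compV _ _ _ _)), sym_inv, comp_id_r.
  rewrite tensm_comp_idm, comp_assoc; unfold compV; rewrite ev_curry.
  rewrite <- !comp_assoc, assoc_nat, (comp_assoc _ _ _ _ _ _ _ (_ ⊗ ev _ _)).
  rewrite <- tensm_comp, comp_id_l, ev_curry. reflexivity.
Qed.

Lemma curry_iso_cotensor (j k m : Jobj V J)
    (c : hom V (tens (jv V J j) (jv V J k)) (jv V J m))
    (d : hom V (jv V J m) (tens (jv V J j) (jv V J k))) :
  c ∘ d = idm _ -> d ∘ c = idm _ -> is_cotensor V (Jop V J) (jv V J j) m k (curry c).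
Proof. intros cd dc y. rewrite cotmap_Jop_curry. apply (double_curry_iso V _ _ _ _ c d cd dc). Qed.

Lemma Coev_cotensor j k : is_cotensor V (Jop V J) (jv V J j) (jt V J j k) k (Coev V J j k).
Proof. apply (curry_iso_cotensor j k (jt V J j k) _ (idm _)); apply comp_id_l. Qed.

Lemma Coev'_cotensor j k : is_cotensor V (Jop V J) (jv V J j) (jt V J k j) k (Coev' V J j k).
Proof. apply (curry_iso_cotensor j k (jt V J k j) _ (sym _ _)); apply sym_inv. Qed.

Lemma lcounit_cotensor (T : Theory V J) j k :
  is_cotensor V (tdata V J T) (jv V J j) (jt V J j k) k (lcounit V J T j k).
Proof. exact (tau_cotensors V J T j _ k _ (Coev_cotensor j k)). Qed.

Lemma rcounit_cotensor (T : Theory V J) j k :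
  is_cotensor V (tdata V J T) (jv V J j) (jt V J k j) k (rcounit V J T j k).
Proof. exact (tau_cotensors V J T j _ k _ (Coev'_cotensor j k)). Qed.

Lemma lfun_exists (T : Theory V J) : exists L, is_lfun V J T L.
Proof.
  assert (lift : forall j k k', exists f,
    cotmap V (tdata V J T) (jv V J j) (jt V J j k) (jt V J j k') k' (lcounit V J T j k') ∘ f
    = curry (tcomp V J T (jt V J j k) k k' ∘ (idm _ ⊗ lcounit V J T j k))).
  { intros j k k'. apply iso_factor, lcounit_cotensor. }
  exists (fun j k k' => proj1_sig (constructive_indefinite_description _ (lift j k k'))).
  intros j k k'. exact (proj2_sig (constructive_indefinite_description _ (lift j k k'))).
Qed.

Lemma rfun_exists (T : Theory V J) : exists R, is_rfun V J T R.
Proof.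
  assert (lift : forall j k k', exists f,
    cotmap V (tdata V J T) (jv V J j) (jt V J k j) (jt V J k' j) k' (rcounit V J T j k') ∘ f
    = curry (tcomp V J T (jt V J k j) k k' ∘ (idm _ ⊗ rcounit V J T j k))).
  { intros j k k'. apply iso_factor, rcounit_cotensor. }
  exists (fun j k k' => proj1_sig (constructive_indefinite_description _ (lift j k k'))).
  intros j k k'. exact (proj2_sig (constructive_indefinite_description _ (lift j k k'))).
Qed.

Section Morphism.
Variables T U : Theory V J.
Variable A : TheoryMor V J T U.

Lemma tm_comp a b c :
  tm A a c ∘ tcomp V J T a b c = tcomp V J U a b c ∘ (tm A b c ⊗ tm A a b).
Proof. apply (proj1 (tm_VFunctor _ _ _ _ A)). Qed.

Lemma tm_lcounit j k : tm A (jt V J j k) k ∘ lcounit V J T j k = lcounit V J U j k.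
Proof. unfold lcounit. rewrite comp_assoc, tm_tau. reflexivity. Qed.

Lemma tm_rcounit j k : tm A (jt V J k j) k ∘ rcounit V J T j k = rcounit V J U j k.
Proof. unfold rcounit. rewrite comp_assoc, tm_tau. reflexivity. Qed.

Lemma cotmap_tm (v : ob V) (y x c : Jobj V J) (e : hom V v (thom V J T x c)) :
  cotmap V (tdata V J U) v y x c (tm A x c ∘ e) ∘ tm A y x
  = curry (tm A y c ∘ ev _ _) ∘ cotmap V (tdata V J T) v y x c e.
Proof.
  unfold cotmap. rewrite curry_precomp, curry_postcomp. f_equal. cbn [ccomp chom tdata].
  rewrite <- !comp_assoc, (comp_assoc _ _ _ _ _ _ _ (tm A _ _)), tm_comp, <- !comp_assoc.
  f_equal. rewrite <- tensm_comp, comp_assoc, <- sym_nat, <- comp_assoc. f_equal.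
  rewrite <- comp_assoc, <- !tensm_comp, !comp_id_l, !comp_id_r. reflexivity.
Qed.

Lemma tm_cotensor_lift (v : ob V) (y x c d : Jobj V J)
    (e1 : hom V v (thom V J T x c)) (e2 : hom V v (thom V J T y d))
    (fT : hom V (thom V J T d c) (thom V J T y x))
    (fU : hom V (thom V J U d c) (thom V J U y x)) :
  is_iso (cotmap V (tdata V J U) v y x c (tm A x c ∘ e1)) ->
  cotmap V (tdata V J T) v y x c e1 ∘ fT = curry (tcomp V J T y d c ∘ (idm _ ⊗ e2)) ->
  cotmap V (tdata V J U) v y x c (tm A x c ∘ e1) ∘ fU
    = curry (tcomp V J U y d c ∘ (idm _ ⊗ (tm A y d ∘ e2))) ->
  tm A y x ∘ fT = fU ∘ tm A d c.
Proof.
  intros iso_U lift_T lift_U. apply (iso_mono V _ _ _ iso_U).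
  rewrite (comp_assoc _ _ _ _ _ fT), cotmap_tm, <- comp_assoc.
  cbn [chom tdata] in *. rewrite lift_T.
  rewrite (comp_assoc _ _ _ _ _ (tm A d c)), lift_U, curry_postcomp, curry_precomp.
  f_equal. rewrite comp_assoc, tm_comp, <- !comp_assoc, <- !tensm_comp.
  rewrite !comp_id_l, !comp_id_r. reflexivity.
Qed.

Lemma tm_lfun L' L : is_lfun V J T L' -> is_lfun V J U L ->
  forall j k k', tm A (jt V J j k) (jt V J j k') ∘ L' j k k' = L j k k' ∘ tm A k k'.
Proof.
  intros lfun_T lfun_U j k k'.
  apply (tm_cotensor_lift _ _ _ _ _ (lcounit V J T j k') (lcounit V J T j k)).
  - rewrite tm_lcounit. apply lcounit_cotensor.
  - apply lfun_T.
  - rewrite !tm_lcounit. apply lfun_U.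
Qed.

Lemma tm_rfun R' R : is_rfun V J T R' -> is_rfun V J U R ->
  forall j k k', tm A (jt V J k j) (jt V J k' j) ∘ R' j k k' = R j k k' ∘ tm A k k'.
Proof.
  intros rfun_T rfun_U j k k'.
  apply (tm_cotensor_lift _ _ _ _ _ (rcounit V J T j k') (rcounit V J T j k)).
  - rewrite tm_rcounit. apply rcounit_cotensor.
  - apply rfun_T.
  - rewrite !tm_rcounit. apply rfun_U.
Qed.

Section Kronecker.
Variables (L' : forall j k k', hom V (thom V J T k k') (thom V J T (jt V J j k) (jt V J j k')))
          (R' : forall j k k', hom V (thom V J T k k') (thom V J T (jt V J k j) (jt V J k' j)))
          (L : forall j k k', hom V (thom V J U k k') (thom V J U (jt V J j k) (jt V J j k')))
          (R : forall j k k', hom V (thom V J U k k') (thom V J U (jt V J k j) (jt V J k' j))).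
Hypotheses (lfun_T : is_lfun V J T L') (rfun_T : is_rfun V J T R')
           (lfun_U : is_lfun V J U L) (rfun_U : is_rfun V J U R).

Lemma tm_kron j j' k k' :
  tm A (jt V J j k) (jt V J j' k') ∘ kron V J T L' R' j j' k k'
  = kron V J U L R j j' k k' ∘ (tm A j j' ⊗ tm A k k').
Proof.
  unfold kron. rewrite comp_assoc, tm_comp, <- !comp_assoc. f_equal.
  rewrite comp_assoc, <- sym_nat, <- !comp_assoc. f_equal.
  rewrite <- !tensm_comp, (tm_lfun L' L), (tm_rfun R' R); trivial.
Qed.

Lemma tm_kront j j' k k' :
  tm A (jt V J j k) (jt V J j' k') ∘ kront V J T L' R' j j' k k'
  = kront V J U L R j j' k k' ∘ (tm A j j' ⊗ tm A k k').
Proof.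
  unfold kront. rewrite comp_assoc, tm_comp, <- !comp_assoc. f_equal.
  rewrite <- !tensm_comp, (tm_lfun L' L), (tm_rfun R' R); trivial.
Qed.
End Kronecker.

Variables (Ph Qh : Jobj V J -> Jobj V J -> ob V)
          (P : forall a b, hom V (Ph a b) (thom V J T a b))
          (Q : forall a b, hom V (Qh a b) (thom V J T a b)).

Lemma commute_fam_postcomp : commute_fam P Q ->
  commute_fam (fun a b => tm A a b ∘ P a b) (fun a b => tm A a b ∘ Q a b).
Proof.
  intros PQ L R lfun_U rfun_U j j' k k'.
  destruct (lfun_exists T) as [L' lfun_T], (rfun_exists T) as [R' rfun_T].
  cbv beta; rewrite !tensm_comp, !comp_assoc.
  rewrite <- (tm_kron L' R' L R), <- (tm_kront L' R' L R), <- !comp_assoc, PQ; trivial.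
Qed.

Lemma commute_fam_of_postcomp : subtheory_embedding A ->
  commute_fam (fun a b => tm A a b ∘ P a b) (fun a b => tm A a b ∘ Q a b) ->
  commute_fam P Q.
Proof.
  intros A_mono APQ L' R' lfun_T rfun_T j j' k k'.
  destruct (lfun_exists U) as [L lfun_U], (rfun_exists U) as [R rfun_U].
  apply A_mono. rewrite !comp_assoc, (tm_kron L' R' L R), (tm_kront L' R' L R); trivial.
  rewrite <- !comp_assoc, <- !tensm_comp. apply APQ; trivial.
Qed.
End Morphism.
End Theories.

Theorem proposition5p15 (V : SMCC) (J : Arities V)
    (TP TQ TT TU : Theory V J)
    (P : TheoryMor V J TP TT) (Q : TheoryMor V J TQ TT)
    (A : TheoryMor V J TT TU) :
  (commute P Q -> commute_fam (mor_comp_fam A P) (mor_comp_fam A Q)) /\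
  (subtheory_embedding A ->
   commute_fam (mor_comp_fam A P) (mor_comp_fam A Q) -> commute P Q).
Proof.
  split.
  - apply commute_fam_postcomp.
  - apply commute_fam_of_postcomp.
Qed.
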